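(* Let $\mathcal{H}$ be a real Hilbert space, $\alpha,\beta>0$, and $f(\theta)=\beta\exp\big(\frac{\|\theta\|^2}{2\alpha}\big)$ for $\theta\in\mathcal{H}$. Then for all $w\in\mathcal{H}$, \[ f^*(w)\ \le\ \|w\|\sqrt{2\alpha\log\Big(\frac{\sqrt{\alpha}\,\|w\|}{\beta}+1\Big)}-\beta. \]
   Context: $f^*(w)=\sup_{\theta\in\mathcal{H}}(\langle\theta,w\rangle-f(\theta))$ is the Fenchel conjugate. *)

From HB Require Import structures.
From mathcomp Require Import all_boot all_order all_algebra.
From mathcomp Require Import all_classical all_reals all_analysis.
Set Implicit Arguments. Unset Strict Implicit. Unset Printing Implicit Defensive.
Import Order.TTheory GRing.Theory Num.Theory.
Import numFieldNormedType.Exports.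
Local Open Scope classical_set_scope.
Local Open Scope ring_scope.

(* A real Hilbert space is a complete normed space V over R together with
   a real inner product ip whose induced norm is the norm of V. *)
Record is_inner_product (R : realType) (V : completeNormedModType R)
    (ip : V -> V -> R) : Prop := {
  ip_sym : forall x y, ip x y = ip y x;
  ip_linl : forall (a : R) x y z, ip (a *: x + y) z = a * ip x z + ip y z;
  ip_norm : forall x, ip x x = `|x| ^+ 2
}.

Definition fenchel_conj (R : realType) (V : completeNormedModType R)
    (ip : V -> V -> R) (f : V -> R) (w : V) : \bar R :=
  ereal_sup [set ((ip theta w - f theta)%:E) | theta in [set: V]].

From HB Require Import structures.
From mathcomp Require Import all_boot all_order all_algebra.
From mathcomp Require Import all_classical all_reals all_analysis.
From mathcomp Require Import ring lra.
Set Implicit Arguments. Unset Strict Implicit. Unset Printing Implicit Defensive.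
Import Order.TTheory GRing.Theory Num.Theory.
Import numFieldNormedType.Exports.
Local Open Scope classical_set_scope.
Local Open Scope ring_scope.

(* By Cauchy-Schwarz, <theta, w> - f theta <= r c - beta exp (r^2 / (2 alpha))
   with r = |theta| and c = |w|, so it suffices to bound this one-variable
   function.  Let s >= 0 solve exp (s^2 / (2 alpha)) = sqrt alpha c / beta + 1;
   the value at r = s is at most the claimed bound.  For r <= s the bound is
   immediate since exp >= 1; for r > s the tangent line of exp at s^2/(2 alpha)
   and the AM-GM inequality 2 q (r - s) <= 2 q^2 + r^2 - s^2 (q = sqrt alpha)
   show that the excess (r - s) c is paid for by the growth of the exponential. *)

Section InnerProduct.
Variables (R : realType) (V : completeNormedModType R) (ip : V -> V -> R).
Hypothesis ipP : is_inner_product ip.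

Lemma ip0l z : ip 0 z = 0.
Proof.
have := ip_linl ipP 1 0 0 z; rewrite scaler0 addr0 mul1r => h.
by apply: (addrI (ip 0 z)); rewrite -h addr0.
Qed.

Lemma ipZl a x z : ip (a *: x) z = a * ip x z.
Proof. by have := ip_linl ipP a x 0 z; rewrite !addr0 ip0l addr0. Qed.

Lemma ipDl x y z : ip (x + y) z = ip x z + ip y z.
Proof. by have := ip_linl ipP 1 x y z; rewrite scale1r mul1r. Qed.

Lemma ipZr a x z : ip z (a *: x) = a * ip z x.
Proof. by rewrite (ip_sym ipP) ipZl (ip_sym ipP). Qed.

Lemma ipDr x y z : ip z (x + y) = ip z x + ip z y.
Proof. by rewrite (ip_sym ipP) ipDl !(ip_sym ipP z). Qed.

Lemma cauchy_schwarz x y : ip x y <= `|x| * `|y|.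
Proof.
have [/eqP|xy_neq0] := eqVneq (`|x| * `|y|) 0.
  rewrite mulf_eq0 => /orP[]; rewrite normr_eq0 => /eqP ->.
    by rewrite ip0l normr0 mul0r.
  by rewrite (ip_sym ipP) ip0l normr0 mulr0.
have xy_gt0 : 0 < `|x| * `|y| by rewrite lt0r xy_neq0 mulr_ge0.
(* expand 0 <= | |y| x - |x| y |^2 and divide by 2 |x| |y| *)
have := sqr_ge0 `| `|y| *: x + (- `|x|) *: y |.
rewrite -(ip_norm ipP) !ipDl !ipDr !ipZl !ipZr !(ip_norm ipP) (ip_sym ipP y x).
nra.
Qed.

End InnerProduct.

Lemma expR_tangent (R : realType) (x y : R) : expR x * (1 + (y - x)) <= expR y.
Proof.
have -> : expR y = expR x * expR (y - x) by rewrite -expRD subrKC.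
by rewrite ler_pM2l ?expR_gt0 ?expR_ge1Dx.
Qed.

Lemma sub_le_amgm (R : realFieldType) (q r s : R) : 0 < q -> 0 <= s <= r ->
  r - s <= q * (1 + (r ^+ 2 - s ^+ 2) / (2 * q ^+ 2)).
Proof.
move=> q_gt0 /andP[s_ge0 sr]; rewrite -(@ler_pM2l _ (2 * q)) ?mulr_gt0 //.
have -> : 2 * q * (q * (1 + (r ^+ 2 - s ^+ 2) / (2 * q ^+ 2)))
          = 2 * q ^+ 2 + (r ^+ 2 - s ^+ 2) by field; rewrite gt_eqF.
have := sqr_ge0 (r - s - q); have : 0 <= s * (r - s) by rewrite mulr_ge0 ?subr_ge0.
nra.
Qed.

Section ScalarBound.
Variables (R : realType) (alpha beta c : R).
Hypotheses (alpha_gt0 : 0 < alpha) (beta_gt0 : 0 < beta) (c_ge0 : 0 <= c).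

Let q := Num.sqrt alpha.
Let A := q * c / beta + 1.
Let s := Num.sqrt (2 * alpha * ln A).

Let two_alpha_gt0 : 0 < 2 * alpha. Proof. by rewrite mulr_gt0. Qed.

Let q_gt0 : 0 < q. Proof. by rewrite sqrtr_gt0. Qed.

Let A_ge1 : 1 <= A.
Proof. by rewrite lerDr divr_ge0 ?mulr_ge0 // ltW. Qed.

Let beta_A : beta * A = q * c + beta.
Proof. by rewrite /A mulrDr mulr1 mulrCA divff ?mulr1 // gt_eqF. Qed.

Let expR_s2 : expR (s ^+ 2 / (2 * alpha)) = A.
Proof.
rewrite sqr_sqrtr; last by rewrite mulr_ge0 ?ln_ge0 // ltW.
rewrite mulrAC divff ?mul1r ?gt_eqF //.
by rewrite lnK // posrE (lt_le_trans ltr01).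
Qed.

Lemma mul_sub_expR_le r : 0 <= r ->
  r * c - beta * expR (r ^+ 2 / (2 * alpha)) <= c * s - beta.
Proof.
move=> r_ge0; have s_ge0 : 0 <= s := sqrtr_ge0 _.
have [rs|sr] := lerP r s.
  have e_ge1 : 1 <= expR (r ^+ 2 / (2 * alpha)).
    by apply: le_trans (expR_ge1Dx _); rewrite lerDl divr_ge0 ?sqr_ge0 // ltW.
  have : beta <= beta * expR (r ^+ 2 / (2 * alpha)) by rewrite ler_peMr // ltW.
  have : r * c <= c * s by rewrite mulrC ler_wpM2l.
  lra.
set d := (r ^+ 2 - s ^+ 2) / (2 * alpha).
have d_ge0 : 0 <= d.
  by rewrite divr_ge0 ?(ltW two_alpha_gt0) // subr_ge0; nra.
have exp_ge : beta * (A * (1 + d)) <= beta * expR (r ^+ 2 / (2 * alpha)).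
  by rewrite ler_pM2l // -expR_s2 /d mulrBl expR_tangent.
have excess_le : c * (r - s) <= c * (q * (1 + d)).
  rewrite ler_wpM2l // /d -[alpha in 2 * alpha](sqr_sqrtr (ltW alpha_gt0)).
  by apply: sub_le_amgm; rewrite // s_ge0 ltW.
rewrite mulrA beta_A in exp_ge.
have : 0 <= beta * d by rewrite mulr_ge0 // ltW.
nra.
Qed.

End ScalarBound.

Theorem lemma14 (R : realType) (V : completeNormedModType R)
    (ip : V -> V -> R) (Hip : is_inner_product ip)
    (alpha beta : R) (Ha : 0 < alpha) (Hb : 0 < beta) (w : V) :
  (fenchel_conj ip (fun theta : V => (beta * expR (`|theta| ^+ 2 / (2 * alpha)))%R) w
   <= (`|w| * Num.sqrt (2 * alpha * ln (Num.sqrt alpha * `|w| / beta + 1)) - beta)%:E)%E.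
Proof.
apply: ge_ereal_sup => _ [theta _ <-]; rewrite lee_fin.
apply: le_trans (mul_sub_expR_le Ha Hb (normr_ge0 w) (normr_ge0 theta)).
by rewrite lerD2r cauchy_schwarz.
Qed.
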